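(* Let $A$ and $B$ be groups each admitting a regular left-order. Then $(A*B)\times\mathbb{Z}$ admits a regular left-order.
   Context: A left-order on a group $G$ is a total order invariant under left multiplication, with positive cone $P=\{g:1\prec g\}$. It is regular if $G$ is finitely generated and there exist a finite set $X$, a surjective monoid homomorphism $\pi\colon X^*\to G$ and a regular language $\mathcal{L}\subseteq X^*$ (accepted by a finite state automaton) with $\pi(\mathcal{L})=P$. $A*B$ denotes the free product. *)

From mathcomp Require Import all_boot.
From Stdlib Require Import ZArith.
Set Warnings "-notation-overridden".

Set Implicit Arguments.
Unset Strict Implicit.
Unset Printing Implicit Defensive.

Record Group := {
  gcar :> Type;
  gmul : gcar -> gcar -> gcar;
  gone : gcar;
  ginv : gcar -> gcar;
  gmulA : forall x y z, gmul x (gmul y z) = gmul (gmul x y) z;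
  gmul1g : forall x, gmul gone x = x;
  gmulVg : forall x, gmul (ginv x) x = gone
}.

Arguments gmul {g}.
Arguments gone {g}.
Arguments ginv {g}.

Definition is_hom (G H : Group) (f : G -> H) : Prop :=
  forall x y : G, f (gmul x y) = gmul (f x) (f y).

(** [G] together with [iA], [iB] is a free product [A * B]
    (characterized by its universal property, which determines it up to
    isomorphism). *)
Definition is_free_product (A B G : Group) (iA : A -> G) (iB : B -> G) : Prop :=
  is_hom iA /\ is_hom iB /\
  forall (H : Group) (f : A -> H) (g : B -> H), is_hom f -> is_hom g ->
    (exists h : G -> H, is_hom h /\ (forall a, h (iA a) = f a) /\
                        (forall b, h (iB b) = g b)) /\
    (forall h1 h2 : G -> H,
        is_hom h1 -> (forall a, h1 (iA a) = f a) -> (forall b, h1 (iB b) = g b) ->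
        is_hom h2 -> (forall a, h2 (iA a) = f a) -> (forall b, h2 (iB b) = g b) ->
        forall x, h1 x = h2 x).

Section ProdZ.
Variable G : Group.
Definition pz_mul (x y : G * Z) : G * Z := (gmul x.1 y.1, (x.2 + y.2)%Z).
Definition pz_one : G * Z := (gone, 0%Z).
Definition pz_inv (x : G * Z) : G * Z := (ginv x.1, (- x.2)%Z).
Lemma pz_mulA x y z : pz_mul x (pz_mul y z) = pz_mul (pz_mul x y) z.
Proof. by rewrite /pz_mul /= gmulA Z.add_assoc. Qed.
Lemma pz_mul1 x : pz_mul pz_one x = x.
Proof. by case: x => a n; rewrite /pz_mul /= gmul1g. Qed.
Lemma pz_mulV x : pz_mul (pz_inv x) x = pz_one.
Proof. by rewrite /pz_mul /= gmulVg Z.add_opp_diag_l. Qed.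
Definition prodZ : Group :=
  {| gcar := G * Z; gmul := pz_mul; gone := pz_one; ginv := pz_inv;
     gmulA := pz_mulA; gmul1g := pz_mul1; gmulVg := pz_mulV |}.
End ProdZ.

Definition left_order (G : Group) (lt : G -> G -> Prop) : Prop :=
  (forall x, ~ lt x x) /\
  (forall x y z, lt x y -> lt y z -> lt x z) /\
  (forall x y, x <> y -> lt x y \/ lt y x) /\
  (forall g x y, lt x y -> lt (gmul g x) (gmul g y)).

Definition positive_cone (G : Group) (lt : G -> G -> Prop) (g : G) : Prop :=
  lt gone g.

Record DFA (X : finType) := {
  dstate : finType;
  dstart : dstate;
  daccept : pred dstate;
  dtrans : dstate -> X -> dstate
}.

Definition dfa_accepts (X : finType) (D : DFA X) (w : seq X) : bool :=
  @daccept X D (foldl (@dtrans X D) (@dstart X D) w).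

Definition word_eval (G : Group) (X : Type) (s : X -> G) (w : seq X) : G :=
  foldr (fun x acc => gmul (s x) acc) gone w.

Definition regular_order (G : Group) (lt : G -> G -> Prop) : Prop :=
  exists (X : finType) (s : X -> G),
    (forall g : G, exists w : seq X, word_eval s w = g) /\
    exists D : DFA X,
      forall g : G, positive_cone lt g <->
        exists w : seq X, dfa_accepts D w /\ word_eval s w = g.

Definition admits_regular_left_order (G : Group) : Prop :=
  exists lt : G -> G -> Prop, left_order lt /\ regular_order lt.

(* Letting A * B act by permutations on reduced words (van der Waerden's trick), the
   universal property yields a normal form nf : G -> reduced words.  Given left orders
   on A and B, weigh a reduced word by minus the number of its negative syllables plus
   the number of its B-syllables followed by an A-syllable.  On normal forms this
   weight is superadditive and satisfies weight (g^-1) = - weight g - 1 for g <> 1, so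
   the nontrivial (g, m) with m + weight g >= 0 form the positive cone of a left order
   on G x Z.  This cone consists exactly of the nonempty products of blocks
   (b a, e1 + e2 - 1) with b in B, a in A and e1, e2 in {0, 1}, where e1 = 0 forces b
   to be positive and e2 = 0 forces a to be positive.  Spelling b and a as words and
   positivity as acceptance by the automata of the cones of B and A, these products
   form a regular language. *)

Set Warnings "-notation-overridden".
From mathcomp Require Import all_boot.
From Stdlib Require Import ZArith Lia ClassicalEpsilon ProofIrrelevance FunctionalExtensionality.
Set Implicit Arguments.
Unset Strict Implicit.
Unset Printing Implicit Defensive.

Section GroupFacts.
Variable H : Group.
Implicit Types x y z : H.

Lemma gmulgV x : gmul x (ginv x) = gone.
Proof.
rewrite -[gmul x (ginv x)]gmul1g -{1}(gmulVg (ginv x)) -gmulA.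
by rewrite (gmulA (ginv x) x) gmulVg gmul1g gmulVg.
Qed.

Lemma gmulg1 x : gmul x gone = x.
Proof. by rewrite -(gmulVg x) gmulA gmulgV gmul1g. Qed.

Lemma gmulKg x y : gmul (ginv x) (gmul x y) = y.
Proof. by rewrite gmulA gmulVg gmul1g. Qed.

Lemma gmulKVg x y : gmul x (gmul (ginv x) y) = y.
Proof. by rewrite gmulA gmulgV gmul1g. Qed.

Lemma gmulI x y z : gmul x y = gmul x z -> y = z.
Proof. by move=> e; rewrite -(gmulKg x y) e gmulKg. Qed.

Lemma ginv_unique x y : gmul x y = gone -> y = ginv x.
Proof. by move=> e; apply: (@gmulI x); rewrite e gmulgV. Qed.

Lemma ginvK x : ginv (ginv x) = x.
Proof. by apply/esym/ginv_unique; rewrite gmulVg. Qed.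

Lemma ginvM x y : ginv (gmul x y) = gmul (ginv y) (ginv x).
Proof.
apply/esym/ginv_unique.
by rewrite -gmulA (gmulA y) gmulgV gmul1g gmulgV.
Qed.

Lemma ginv1 : ginv (@gone H) = gone.
Proof. by apply/esym/ginv_unique; rewrite gmulg1. Qed.

Lemma ginv_eq1 x : ginv x = gone -> x = gone.
Proof. by move=> e; rewrite -(ginvK x) e ginv1. Qed.

End GroupFacts.

Lemma hom1 (H K : Group) (f : H -> K) : is_hom f -> f gone = gone.
Proof. by move=> hf; apply: (@gmulI _ (f gone)); rewrite -hf gmul1g gmulg1. Qed.

Lemma homV (H K : Group) (f : H -> K) x : is_hom f -> f (ginv x) = ginv (f x).
Proof. by move=> hf; apply: ginv_unique; rewrite -hf gmulgV hom1. Qed.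

Lemma prodZ_mulE (H : Group) (x y : prodZ H) : gmul x y = (gmul x.1 y.1, (x.2 + y.2)%Z).
Proof. by []. Qed.

Lemma word_eval_cons (H : Group) (X : Type) (s : X -> H) x w :
  word_eval s (x :: w) = gmul (s x) (word_eval s w).
Proof. by []. Qed.

Lemma word_eval_cat (H : Group) (X : Type) (s : X -> H) u v :
  word_eval s (u ++ v) = gmul (word_eval s u) (word_eval s v).
Proof. by elim: u => [|x u IH] /=; rewrite ?gmul1g ?IH ?gmulA. Qed.

Lemma word_eval_nseq_central (H : Group) (X : Type) (s : X -> prodZ H) x z n :
  s x = (gone, z) -> word_eval s (nseq n x) = (gone, (Z.of_nat n * z)%Z).
Proof.
move=> sx; elim: n => [|n IH] //.
rewrite -[nseq _ _]/(x :: nseq n x) word_eval_cons IH sx prodZ_mulE gmul1g.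
by rewrite Nat2Z.inj_succ Z.mul_succ_l Z.add_comm.
Qed.

Section ConeOrder.
Variables (H : Group) (P : H -> Prop).
Hypothesis P_mul : forall x y, P x -> P y -> P (gmul x y).
Hypothesis P_1 : ~ P gone.
Hypothesis P_total : forall x, x <> gone -> P x \/ P (ginv x).

Definition cone_lt (x y : H) : Prop := P (gmul (ginv x) y).

Lemma cone_lt_left_order : left_order cone_lt.
Proof.
split; [|split; [|split]].
- by move=> x; rewrite /cone_lt gmulVg.
- move=> x y z hxy hyz; have := P_mul hxy hyz.
  by rewrite /cone_lt -gmulA gmulKVg.
- move=> x y ne; have ne' : gmul (ginv x) y <> gone.
    by move=> e; apply: ne; rewrite -(gmulKVg x y) e gmulg1.
  by case: (P_total ne'); rewrite /cone_lt ?ginvM ?ginvK; [left|right].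
- by move=> g x y; rewrite /cone_lt ginvM -gmulA gmulKg.
Qed.

Lemma positive_cone_lt x : positive_cone cone_lt x <-> P x.
Proof. by rewrite /positive_cone /cone_lt ginv1 gmul1g. Qed.

End ConeOrder.

Definition isneg (H : Group) (lt : H -> H -> Prop) (x : H) : bool :=
  if excluded_middle_informative (lt x gone) then true else false.

Definition negz (H : Group) (lt : H -> H -> Prop) (x : H) : Z := Z.b2z (isneg lt x).

Section NegativeElements.
Variables (H : Group) (lt : H -> H -> Prop).
Hypothesis lo : left_order lt.
Implicit Types x y : H.

Lemma lt_irrefl x : ~ lt x x. Proof. by case: lo. Qed.

Lemma lt_trans x y z : lt x y -> lt y z -> lt x z.
Proof. by case: lo => _ [t _]; apply: t. Qed.

Lemma lt_total x y : x <> y -> lt x y \/ lt y x.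
Proof. by case: lo => _ [_ [t _]]; apply: t. Qed.

Lemma lt_mul2l g x y : lt x y -> lt (gmul g x) (gmul g y).
Proof. by case: lo => _ [_ [_ t]]; apply: t. Qed.

Lemma isnegP x : reflect (lt x gone) (isneg lt x).
Proof. by rewrite /isneg; case: excluded_middle_informative => h; constructor. Qed.

Lemma isneg1 : isneg lt gone = false.
Proof. by apply/isnegP/lt_irrefl. Qed.

Lemma isneg_pos x : lt gone x -> isneg lt x = false.
Proof. by move=> h; apply/isnegP => h'; apply: (lt_irrefl (lt_trans h h')). Qed.

Lemma pos_of_notneg x : x <> gone -> ~~ isneg lt x -> lt gone x.
Proof. by move=> ne /isnegP nn; case: (lt_total ne). Qed.

Lemma isnegV x : x <> gone -> isneg lt (ginv x) = ~~ isneg lt x.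
Proof.
move=> ne; case: (isnegP x) => h /=.
  by apply: isneg_pos; have := lt_mul2l (ginv x) h; rewrite gmulVg gmulg1.
apply/isnegP; have := lt_mul2l (ginv x) (pos_of_notneg ne (introN (isnegP x) h)).
by rewrite gmulVg gmulg1.
Qed.

Lemma isnegM x y : isneg lt (gmul x y) -> isneg lt x || isneg lt y.
Proof.
case: (isnegP x) => //= hx; case: (isnegP y) => //= hy /isnegP hxy.
have [ex|nex] := excluded_middle_informative (x = gone).
  by move: hxy; rewrite ex gmul1g.
have [ey|ney] := excluded_middle_informative (y = gone).
  by move: hxy; rewrite ey gmulg1.
have px := pos_of_notneg nex (introN (isnegP x) hx).
have := lt_mul2l x (pos_of_notneg ney (introN (isnegP y) hy)); rewrite gmulg1 => h.
by case: (lt_irrefl (lt_trans (lt_trans px h) hxy)).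
Qed.

Lemma negz1 : negz lt gone = 0%Z.
Proof. by rewrite /negz isneg1. Qed.

Lemma negz_pos x : lt gone x -> negz lt x = 0%Z.
Proof. by move=> /isneg_pos; rewrite /negz => ->. Qed.

Lemma negz_bound x : (0 <= negz lt x <= 1)%Z.
Proof. by rewrite /negz; case: isneg => /=; lia. Qed.

Lemma negzM x y : (negz lt (gmul x y) <= negz lt x + negz lt y)%Z.
Proof.
rewrite /negz; case h: (isneg lt (gmul x y)); last by case: (isneg lt x); case: (isneg lt y).
by move/isnegM: h; case: (isneg lt x); case: (isneg lt y).
Qed.

Lemma negzV x : x <> gone -> negz lt (ginv x) = (1 - negz lt x)%Z.
Proof. by rewrite /negz => /isnegV ->; case: isneg. Qed.

End NegativeElements.

Section ReducedWords.
Variables A B : Group.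

Definition syllable := (gcar A + gcar B)%type.

Definition nontrivial (c : syllable) : Prop :=
  match c with inl a => a <> gone | inr b => b <> gone end.
Definition isB (c : syllable) : bool := if c is inr _ then true else false.
Definition headA (w : seq syllable) : bool := if w is inl _ :: _ then true else false.
Definition headB (w : seq syllable) : bool := if w is inr _ :: _ then true else false.

Fixpoint reduced (w : seq syllable) : Prop :=
  match w with
  | [::] => True
  | c :: w' => nontrivial c /\ (if w' is c' :: _ then isB c != isB c' else True) /\ reduced w'
  end.

Definition consA (a : A) (w : seq syllable) : seq syllable :=
  if excluded_middle_informative (a = gone) then w else inl a :: w.
Definition consB (b : B) (w : seq syllable) : seq syllable :=
  if excluded_middle_informative (b = gone) then w else inr b :: w.

Definition actA (a : A) (w : seq syllable) : seq syllable :=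
  if w is inl x :: w' then consA (gmul a x) w' else consA a w.
Definition actB (b : B) (w : seq syllable) : seq syllable :=
  if w is inr x :: w' then consB (gmul b x) w' else consB b w.
Definition actS (c : syllable) : seq syllable -> seq syllable :=
  match c with inl a => actA a | inr b => actB b end.

Lemma consA1 w : consA gone w = w.
Proof. by rewrite /consA; case: excluded_middle_informative. Qed.
Lemma consB1 w : consB gone w = w.
Proof. by rewrite /consB; case: excluded_middle_informative. Qed.
Lemma consA_nt a w : a <> gone -> consA a w = inl a :: w.
Proof. by rewrite /consA; case: excluded_middle_informative. Qed.
Lemma consB_nt b w : b <> gone -> consB b w = inr b :: w.
Proof. by rewrite /consB; case: excluded_middle_informative. Qed.

Lemma actA_consA a x w : ~~ headA w -> actA a (consA x w) = consA (gmul a x) w.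
Proof.
have [->|nx] := excluded_middle_informative (x = gone); last by rewrite consA_nt.
by rewrite consA1 gmulg1; case: w => [|[y|y] w].
Qed.
Lemma actB_consB b y w : ~~ headB w -> actB b (consB y w) = consB (gmul b y) w.
Proof.
have [->|ny] := excluded_middle_informative (y = gone); last by rewrite consB_nt.
by rewrite consB1 gmulg1; case: w => [|[x|x] w].
Qed.

Lemma consA_decomp w : reduced w -> exists x w', w = consA x w' /\ ~~ headA w' /\ reduced w'.
Proof.
case: w => [|[x|x] w] /=.
- by move=> _; exists gone, [::]; rewrite consA1.
- move=> [nx [h r]]; exists x, w; rewrite consA_nt //.
  by case: w h r => [|[y|y] w].
- by move=> r; exists gone, (inr x :: w); rewrite consA1.
Qed.
Lemma consB_decomp w : reduced w -> exists y w', w = consB y w' /\ ~~ headB w' /\ reduced w'.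
Proof.
case: w => [|[x|x] w] /=.
- by move=> _; exists gone, [::]; rewrite consB1.
- by move=> r; exists gone, (inl x :: w); rewrite consB1.
- move=> [nx [h r]]; exists x, w; rewrite consB_nt //.
  by case: w h r => [|[y|y] w].
Qed.

Lemma reduced_consA x w : ~~ headA w -> reduced w -> reduced (consA x w).
Proof.
rewrite /consA; case: excluded_middle_informative => //= nx nA r.
by case: w nA r => [|[y|y] w].
Qed.
Lemma reduced_consB y w : ~~ headB w -> reduced w -> reduced (consB y w).
Proof.
rewrite /consB; case: excluded_middle_informative => //= ny nB r.
by case: w nB r => [|[x|x] w].
Qed.

Lemma reduced_actA a w : reduced w -> reduced (actA a w).
Proof.
by move=> /consA_decomp [x [w' [-> [nA r]]]]; rewrite actA_consA //; apply: reduced_consA.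
Qed.
Lemma reduced_actB b w : reduced w -> reduced (actB b w).
Proof.
by move=> /consB_decomp [y [w' [-> [nB r]]]]; rewrite actB_consB //; apply: reduced_consB.
Qed.
Lemma reduced_actS c w : reduced w -> reduced (actS c w).
Proof. by case: c => [a|b]; [apply: reduced_actA|apply: reduced_actB]. Qed.

Lemma actAM a a' w : reduced w -> actA (gmul a a') w = actA a (actA a' w).
Proof. by move=> /consA_decomp [x [w' [-> [nA r]]]]; rewrite !actA_consA // gmulA. Qed.
Lemma actBM b b' w : reduced w -> actB (gmul b b') w = actB b (actB b' w).
Proof. by move=> /consB_decomp [y [w' [-> [nB r]]]]; rewrite !actB_consB // gmulA. Qed.

Lemma actA1 w : reduced w -> actA gone w = w.
Proof. by move=> /consA_decomp [x [w' [-> [nA r]]]]; rewrite actA_consA // gmul1g. Qed.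
Lemma actB1 w : reduced w -> actB gone w = w.
Proof. by move=> /consB_decomp [y [w' [-> [nB r]]]]; rewrite actB_consB // gmul1g. Qed.

Lemma actS_cons c w : reduced (c :: w) -> actS c w = c :: w.
Proof.
case: c => [a|b] [nc [hc _]] /=.
- by case: w hc => [|[x|x] w] //= _; rewrite consA_nt.
- by case: w hc => [|[x|x] w] //= _; rewrite consB_nt.
Qed.

Fixpoint lastB (w : seq syllable) : bool :=
  match w with
  | [::] => false
  | [:: c] => isB c
  | _ :: w' => lastB w'
  end.

Lemma lastB_rcons w c : lastB (rcons w c) = isB c.
Proof. by elim: w => [|x w IH] //=; rewrite IH; case: w {IH}. Qed.

Lemma reduced_rcons w c :
  reduced (rcons w c) <->
  [/\ reduced w, nontrivial c & if w is [::] then True else lastB w != isB c].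
Proof.
elim: w => [|x [|y w] IH]; first by split=> /= [[]|[]].
- by split=> /= [[nx [h [nc _]]]|[[nx _] nc h]].
- have -> : reduced (x :: rcons (y :: w) c) <->
    nontrivial x /\ isB x != isB y /\ reduced (rcons (y :: w) c) by [].
  rewrite IH; split=> [[nx [h [ry nc hl]]]|[[nx [h ry]] nc hl]] //.
Qed.

Definition mulw (u w : seq syllable) : seq syllable := foldr actS w u.

Lemma mulw_rcons u c w : mulw (rcons u c) w = mulw u (actS c w).
Proof. by rewrite /mulw foldr_rcons. Qed.

Lemma reduced_mulw u w : reduced w -> reduced (mulw u w).
Proof. by elim: u => [|c u IH] //= rw; apply/reduced_actS/IH. Qed.

Definition syl_inv (c : syllable) : syllable :=
  match c with inl a => inl (ginv a) | inr b => inr (ginv b) end.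
Definition inv_word (w : seq syllable) : seq syllable := rev (map syl_inv w).

Lemma inv_word_cons c w : inv_word (c :: w) = rcons (inv_word w) (syl_inv c).
Proof. by rewrite /inv_word /= rev_cons. Qed.

Lemma reduced_inv_word w : reduced w -> reduced (inv_word w).
Proof.
elim: w => [|c w IH] //= [nc [hc rw]].
rewrite inv_word_cons; apply/reduced_rcons; split; first exact: IH.
  by case: c nc {hc} => x nx /ginv_eq1.
case: w hc {IH rw} => [|c' w] //= hc.
rewrite inv_word_cons lastB_rcons.
by case: (inv_word w) => [|? ?]; case: c c' hc {nc} => ? [] ?.
Qed.

Variables (G : Group) (iA : A -> G) (iB : B -> G).
Hypotheses (iA_hom : is_hom iA) (iB_hom : is_hom iB).

Definition syl_eval (c : syllable) : G :=
  match c with inl a => iA a | inr b => iB b end.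
Definition eval (w : seq syllable) : G := word_eval syl_eval w.

Lemma eval_consA x w : eval (consA x w) = gmul (iA x) (eval w).
Proof.
have [->|nx] := excluded_middle_informative (x = gone); last by rewrite consA_nt.
by rewrite consA1 (hom1 iA_hom) gmul1g.
Qed.
Lemma eval_consB y w : eval (consB y w) = gmul (iB y) (eval w).
Proof.
have [->|ny] := excluded_middle_informative (y = gone); last by rewrite consB_nt.
by rewrite consB1 (hom1 iB_hom) gmul1g.
Qed.

Lemma eval_actS c w : reduced w -> eval (actS c w) = gmul (syl_eval c) (eval w).
Proof.
case: c => [a|b] /=.
- by move=> /consA_decomp [x [w' [-> [nA _]]]]; rewrite actA_consA // !eval_consA iA_hom gmulA.
- by move=> /consB_decomp [y [w' [-> [nB _]]]]; rewrite actB_consB // !eval_consB iB_hom gmulA.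
Qed.

Lemma eval_mulw u w : reduced w -> eval (mulw u w) = gmul (eval u) (eval w).
Proof.
elim: u => [|c u IH] rw /=; first by rewrite gmul1g.
by rewrite eval_actS ?IH ?gmulA //; apply: reduced_mulw.
Qed.

Lemma eval_inv_word w : eval (inv_word w) = ginv (eval w).
Proof.
elim: w => [|c w IH] /=; first by rewrite ginv1.
rewrite /eval in IH *; rewrite inv_word_cons -cats1 word_eval_cat IH /= gmulg1 ginvM.
by case: c => x /=; rewrite homV.
Qed.

End ReducedWords.

Section Permutations.
Variable T : Type.

Definition perm_of := {p : (T -> T) * (T -> T) |
  (forall x, p.1 (p.2 x) = x) /\ (forall x, p.2 (p.1 x) = x)}.

Lemma perm_of_ext (p q : perm_of) :
  (forall x, (sval p).1 x = (sval q).1 x) ->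
  (forall x, (sval p).2 x = (sval q).2 x) -> p = q.
Proof.
case: p q => [[f g] hp] [[f' g'] hq] /= e1 e2.
move: hq; rewrite -(functional_extensionality _ _ e1) -(functional_extensionality _ _ e2).
by move=> hq; rewrite (proof_irrelevance _ hp hq).
Qed.

Definition perm_mul (p q : perm_of) : perm_of.
Proof.
exists ((fun x => (sval p).1 ((sval q).1 x)), (fun x => (sval q).2 ((sval p).2 x))).
case: p q => [[f g] /= [hp1 hp2]] [[f' g'] /= [hq1 hq2]].
by split=> x /=; rewrite ?hq1 ?hp1 ?hp2 ?hq2.
Defined.

Definition perm_one : perm_of.
Proof. by exists (id, id). Defined.

Definition perm_inv (p : perm_of) : perm_of.
Proof. by exists ((sval p).2, (sval p).1); case: p => [[f g] [h1 h2]]. Defined.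

Lemma perm_mulA x y z : perm_mul x (perm_mul y z) = perm_mul (perm_mul x y) z.
Proof. by apply: perm_of_ext. Qed.
Lemma perm_mul1 x : perm_mul perm_one x = x.
Proof. by apply: perm_of_ext. Qed.
Lemma perm_mulV x : perm_mul (perm_inv x) x = perm_one.
Proof. by apply: perm_of_ext => y; case: x => [[f g] /= [h1 h2]]. Qed.

Definition sym_group : Group :=
  {| gcar := perm_of; gmul := perm_mul; gone := perm_one; ginv := perm_inv;
     gmulA := perm_mulA; gmul1g := perm_mul1; gmulVg := perm_mulV |}.

Definition perm_app (p : sym_group) (x : T) : T := (sval p).1 x.

Lemma perm_appM (p q : sym_group) x : perm_app (gmul p q) x = perm_app p (perm_app q x).
Proof. by []. Qed.

End Permutations.

Section SubgroupGroup.
Variables (G : Group) (Q : G -> Prop).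
Hypotheses (Q1 : Q gone) (QM : forall x y, Q x -> Q y -> Q (gmul x y))
           (QV : forall x, Q x -> Q (ginv x)).

Definition subg := {g : G | Q g}.

Lemma subg_ext (x y : subg) : sval x = sval y -> x = y.
Proof. by case: x y => [x hx] [y hy] /= e; subst y; rewrite (proof_irrelevance _ hx hy). Qed.

Definition subg_mul (x y : subg) : subg := exist _ _ (QM (svalP x) (svalP y)).
Definition subg_inv (x : subg) : subg := exist _ _ (QV (svalP x)).

Lemma subg_mulA x y z : subg_mul x (subg_mul y z) = subg_mul (subg_mul x y) z.
Proof. by apply: subg_ext; apply: gmulA. Qed.
Lemma subg_mul1 x : subg_mul (exist _ _ Q1) x = x.
Proof. by apply: subg_ext; apply: gmul1g. Qed.
Lemma subg_mulV x : subg_mul (subg_inv x) x = exist _ _ Q1.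
Proof. by apply: subg_ext; apply: gmulVg. Qed.

Definition subgroup : Group :=
  {| gcar := subg; gmul := subg_mul; gone := exist _ _ Q1; ginv := subg_inv;
     gmulA := subg_mulA; gmul1g := subg_mul1; gmulVg := subg_mulV |}.

End SubgroupGroup.

Lemma free_product_ind (A B G : Group) (iA : A -> G) (iB : B -> G) (Q : G -> Prop) :
  is_free_product iA iB ->
  Q gone -> (forall x y, Q x -> Q y -> Q (gmul x y)) -> (forall x, Q x -> Q (ginv x)) ->
  (forall a, Q (iA a)) -> (forall b, Q (iB b)) -> forall g, Q g.
Proof.
move=> [hA [hB U]] Q1 QM QV QA QB g.
pose S := subgroup Q1 QM QV.
have jA : is_hom (fun a => exist Q (iA a) (QA a) : S) by move=> x y; apply/subg_ext/hA.
have jB : is_hom (fun b => exist Q (iB b) (QB b) : S) by move=> x y; apply/subg_ext/hB.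
have [[h [hh [ha hb]]] _] := U S _ _ jA jB.
have [_ uniq] := U G iA iB hA hB.
have -> : g = sval (h g).
  by apply: (uniq id (fun x => sval (h x))) => // [x y|a|b]; rewrite ?hh ?ha ?hb.
exact: svalP.
Qed.

Section NormalForms.
Variables (A B G : Group) (iA : A -> G) (iB : B -> G).

Definition normal_form (nf : G -> seq (syllable A B)) : Prop :=
  [/\ forall g, reduced (nf g), forall g, eval iA iB (nf g) = g
    & forall w, reduced w -> nf (eval iA iB w) = w].

Definition rword := {w : seq (syllable A B) | reduced w}.

Lemma rword_ext (x y : rword) : sval x = sval y -> x = y.
Proof. by case: x y => [x hx] [y hy] /= e; subst y; rewrite (proof_irrelevance _ hx hy). Qed.

Definition rword_actS (c : syllable A B) (x : rword) : rword :=
  exist _ _ (reduced_actS c (svalP x)).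

Definition permA (a : A) : sym_group rword.
Proof.
exists (rword_actS (inl a), rword_actS (inl (ginv a))).
by split=> x; apply: rword_ext => /=; rewrite -actAM ?(gmulgV, gmulVg) ?actA1 //; apply: svalP.
Defined.
Definition permB (b : B) : sym_group rword.
Proof.
exists (rword_actS (inr b), rword_actS (inr (ginv b))).
by split=> x; apply: rword_ext => /=; rewrite -actBM ?(gmulgV, gmulVg) ?actB1 //; apply: svalP.
Defined.

Lemma permA_hom : is_hom permA.
Proof.
move=> x y; apply: perm_of_ext => w; apply: rword_ext => /=;
  by rewrite ?ginvM actAM //; apply: svalP.
Qed.
Lemma permB_hom : is_hom permB.
Proof.
move=> x y; apply: perm_of_ext => w; apply: rword_ext => /=;
  by rewrite ?ginvM actBM //; apply: svalP.
Qed.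

Lemma free_product_normal_form : is_free_product iA iB -> exists nf, normal_form nf.
Proof.
move=> FP; have [hA [hB U]] := FP.
have [[rho [rho_hom [rhoA rhoB]]] _] := U _ _ _ permA_hom permB_hom.
have rho_syl c x : perm_app (rho (syl_eval iA iB c)) x = rword_actS c x.
  by case: c => [a|b]; rewrite /= ?rhoA ?rhoB.
have eval_rho g x : eval iA iB (sval (perm_app (rho g) x)) = gmul g (eval iA iB (sval x)).
  move: g x; apply: (free_product_ind FP) => [x|g h IHg IHh x|g IH x|a x|b x].
  - by rewrite (hom1 rho_hom) gmul1g.
  - by rewrite rho_hom perm_appM IHg IHh gmulA.
  - have e : perm_app (rho g) (perm_app (rho (ginv g)) x) = x.
      by rewrite -perm_appM -rho_hom gmulgV (hom1 rho_hom).
    by rewrite -[in RHS]e IH gmulKg.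
  - by rewrite (rho_syl (inl a)) /= (eval_actS hA hB (inl a) (svalP x)).
  - by rewrite (rho_syl (inr b)) /= (eval_actS hA hB (inr b) (svalP x)).
pose nil_rword : rword := exist _ [::] I.
exists (fun g => sval (perm_app (rho g) nil_rword)); split.
- by move=> g; apply: svalP.
- by move=> g; rewrite eval_rho gmulg1.
- elim=> [|c w IH] /=; first by rewrite (hom1 rho_hom).
  move=> r; have [_ [_ rw]] := r.
  by rewrite rho_hom perm_appM rho_syl /= IH // actS_cons.
Qed.

End NormalForms.

Section Weight.
Variables (A B : Group) (ltA : A -> A -> Prop) (ltB : B -> B -> Prop).
Hypotheses (LA : left_order ltA) (LB : left_order ltB).
Implicit Types (u w : seq (syllable A B)) (c : syllable A B).

Definition nu c : Z := match c with inl a => negz ltA a | inr b => negz ltB b end.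

Fixpoint weight w : Z :=
  match w with
  | [::] => 0
  | c :: w' => - nu c + (if w' is [::] then 0 else Z.b2z (isB c)) + weight w'
  end.

Lemma weight_rcons u c : weight (rcons u c) = (weight u - nu c + Z.b2z (lastB u))%Z.
Proof.
elim: u => [|x u IH] /=; first by case: (isB c) => /=; lia.
by rewrite IH; case: u IH => [|y u] /= IH; case: (isB x) => /=; lia.
Qed.

Lemma nu_syl_inv c : nontrivial c -> nu (syl_inv c) = (1 - nu c)%Z.
Proof. by case: c => x nx /=; rewrite ?(negzV LA) ?(negzV LB). Qed.

Lemma weight_consA a w : weight (consA a w) = (- negz ltA a + weight w)%Z.
Proof.
have [->|na] := excluded_middle_informative (a = gone); first by rewrite consA1 (negz1 LA).
by rewrite consA_nt //; case: w => [|? ?] /=; lia.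
Qed.

Lemma weight_BA b a w :
  weight (inr b :: inl a :: w) = (- negz ltB b + 1 - negz ltA a + weight w)%Z.
Proof. by case: w => [|? ?] /=; lia. Qed.

(* [t] tells whether [a] is preceded by a B-syllable, i.e. whether a BA-junction is at
   stake. *)
Lemma weight_actA a w (t : bool) : a <> gone -> reduced w ->
  (weight w - negz ltA a + Z.b2z t <= weight (actA a w) + Z.b2z (t && headA (actA a w)))%Z.
Proof.
move=> na /consA_decomp [x [w' [-> [nA _]]]]; rewrite actA_consA // !weight_consA.
have [e|ne] := excluded_middle_informative (gmul a x = gone).
  rewrite e consA1 (negbTE nA) andbF (ginv_unique e) (negzV LA) // (negz1 LA).
  by have := negz_bound ltA a; case: t; cbn [Z.b2z]; lia.
rewrite consA_nt //= andbT.
by have := negzM LA (x := a) (y := x); case: t; cbn [Z.b2z]; lia.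
Qed.

Lemma weight_actB b w : b <> gone -> reduced w ->
  (weight w - negz ltB b + Z.b2z (headA w) <= weight (actB b w))%Z.
Proof.
move=> nb /consB_decomp [y [w' [-> [nB _]]]]; rewrite actB_consB //.
have [->|ny] := excluded_middle_informative (y = gone).
  rewrite consB1 gmulg1 consB_nt //.
  by case: w' nB => [|[]] //= *; lia.
rewrite (consB_nt _ ny).
have [e|ne] := excluded_middle_informative (gmul b y = gone).
  rewrite e consB1; case: w' {nB} => [|? ?]; cbn [weight nu isB headA Z.b2z];
  by rewrite (ginv_unique e) (negzV LB) //; lia.
rewrite consB_nt //; have := negzM LB (x := b) (y := y).
by case: w' {nB}; cbn [weight nu isB headA Z.b2z]; lia.
Qed.

Lemma weight_mulw u w : reduced u -> reduced w ->
  (weight u + weight w + Z.b2z (lastB u && headA w) <= weight (mulw u w))%Z.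
Proof.
elim/last_ind: u w => [|u c IH] w; first by move=> _ _ /=; lia.
move=> /reduced_rcons [ru nc hc] rw.
rewrite mulw_rcons weight_rcons lastB_rcons.
have := IH _ ru (reduced_actS c rw).
case: c nc hc => [a|b] /= nc hc.
  by have := weight_actA (t := lastB u) nc rw; lia.
have -> : lastB u = false by case: u hc {IH ru} => // ? ?; case: lastB.
by have := weight_actB nc rw; cbn [andb Z.b2z]; lia.
Qed.

Lemma weight_inv_word w : reduced w -> w <> [::] -> weight (inv_word w) = (- weight w - 1)%Z.
Proof.
elim: w => [|c w IH] //= [nc [hc rw]] _.
rewrite inv_word_cons weight_rcons nu_syl_inv //.
case: w hc IH rw => [|c' w] hc IH rw.
  by rewrite (_ : inv_word [::] = [::]) //; cbn [weight lastB Z.b2z]; lia.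
rewrite IH // inv_word_cons lastB_rcons.
by case: c c' hc {nc IH rw} => ? [] ? // _; cbn [isB syl_inv Z.b2z]; lia.
Qed.

End Weight.

Section WeightCone.
Variables (A B G : Group) (iA : A -> G) (iB : B -> G).
Hypotheses (iA_hom : is_hom iA) (iB_hom : is_hom iB).
Variables (ltA : A -> A -> Prop) (ltB : B -> B -> Prop).
Hypotheses (LA : left_order ltA) (LB : left_order ltB).
Variable nf : G -> seq (syllable A B).
Hypothesis NF : normal_form iA iB nf.

Lemma reduced_nf g : reduced (nf g). Proof. by case: NF. Qed.
Lemma eval_nf g : eval iA iB (nf g) = g. Proof. by case: NF. Qed.
Lemma nf_eval w : reduced w -> nf (eval iA iB w) = w. Proof. by case: NF => _ _; apply. Qed.

Lemma nf1 : nf gone = [::].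
Proof. exact: (@nf_eval [::]). Qed.

Lemma nf_eq1 g : nf g = [::] -> g = gone.
Proof. by move=> e; rewrite -(eval_nf g) e. Qed.

Lemma nf_mul g h : nf (gmul g h) = mulw (nf g) (nf h).
Proof.
rewrite -{1}(eval_nf g) -{1}(eval_nf h) -eval_mulw ?nf_eval //.
  exact/reduced_mulw/reduced_nf.
exact: reduced_nf.
Qed.

Lemma nf_inv g : nf (ginv g) = inv_word (nf g).
Proof.
rewrite -{1}(eval_nf g) -eval_inv_word ?nf_eval //.
exact/reduced_inv_word/reduced_nf.
Qed.

Lemma nf_BA b a : nf (gmul (iB b) (iA a)) = consB b (consA a [::]).
Proof.
rewrite -(@nf_eval (consB b (consA a [::]))) ?eval_consB ?eval_consA /= ?gmulg1 //.
apply: reduced_consB; last exact: reduced_consA.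
by rewrite /consA; case: excluded_middle_informative.
Qed.

Definition nf_weight (g : G) : Z := weight ltA ltB (nf g).

Lemma nf_weight1 : nf_weight gone = 0%Z.
Proof. by rewrite /nf_weight nf1. Qed.

Lemma nf_weightM g h : (nf_weight g + nf_weight h <= nf_weight (gmul g h))%Z.
Proof.
rewrite /nf_weight nf_mul.
by have := weight_mulw LA LB (reduced_nf g) (reduced_nf h); case: (_ && _) => /=; lia.
Qed.

Lemma nf_weightV g : g <> gone -> nf_weight (ginv g) = (- nf_weight g - 1)%Z.
Proof.
move=> ng; rewrite /nf_weight nf_inv weight_inv_word //; first exact: reduced_nf.
by move/nf_eq1.
Qed.

Definition zcone (x : prodZ G) : Prop := x <> gone /\ (0 <= x.2 + nf_weight x.1)%Z.

Lemma zcone1 : ~ zcone gone.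
Proof. by case. Qed.

Lemma zcone_mul x y : zcone x -> zcone y -> zcone (gmul x y).
Proof.
case: x y => [g m] [h n] [nx /= px] [ny /= py].
have := nf_weightM (g := g) (h := h); split=> /=; last by lia.
case=> /ginv_unique eh en; subst h.
have [eg|ng] := excluded_middle_informative (g = gone).
  move: nx px py; rewrite eg ginv1 nf_weight1 => nx px py.
  by apply: nx; congr pair; lia.
by move: py; rewrite nf_weightV //; lia.
Qed.

Lemma zcone_total x : x <> gone -> zcone x \/ zcone (ginv x).
Proof.
case: x => g m nx; rewrite /zcone /=.
have [eg|ng] := excluded_middle_informative (g = gone).
  subst g; rewrite ginv1 nf_weight1.
  have nm : m <> 0%Z by move=> em; apply: nx; rewrite em.
  have [hm|hm] := Z_le_gt_dec 0 m; first by left; split=> //; lia.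
  by right; split=> [[]|]; lia.
have ngV : ginv g <> gone by move/ginv_eq1.
rewrite nf_weightV //.
have [hm|hm] := Z_le_gt_dec 0 (m + nf_weight g); first by left.
by right; split=> [[/ngV]|]; lia.
Qed.

End WeightCone.

Section BlockAutomaton.
Variables (XA XB : finType) (DA : DFA XA) (DB : DFA XB).

Definition letter : finType := ((bool * bool) + (XA + XB))%type.

Record block := Block { token : bool * bool; bpart : seq XB; apart : seq XA }.

Definition block_word (bl : block) : seq letter :=
  inl (token bl) :: map (inr \o inr) (bpart bl) ++ map (inr \o inl) (apart bl).

Definition token_ok (k : bool * bool) (qB : dstate DB) (qA : dstate DA) : bool :=
  (k.1 || daccept qB) && (k.2 || daccept qA).

Definition block_valid (bl : block) : bool :=
  token_ok (token bl) (foldl (@dtrans _ DB) (dstart DB) (bpart bl))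
                      (foldl (@dtrans _ DA) (dstart DA) (apart bl)).

(* [None] is the dead state and [Some None] the initial one; otherwise the state records
   the token of the current block, whether its A-part has begun, and the states of the
   two automata. *)
Definition bstate : finType := option (option ((bool * bool) * bool * dstate DB * dstate DA)).

Definition btrans (s : bstate) (x : letter) : bstate :=
  match s, x with
  | Some None, inl k => Some (Some (k, false, dstart DB, dstart DA))
  | Some (Some (k, _, qB, qA)), inl k' =>
      if token_ok k qB qA then Some (Some (k', false, dstart DB, dstart DA)) else None
  | Some (Some (k, _, qB, qA)), inr (inl xa) => Some (Some (k, true, qB, dtrans qA xa))
  | Some (Some (k, ph, qB, qA)), inr (inr xb) =>
      if ph then None else Some (Some (k, false, dtrans qB xb, qA))
  | _, _ => None
  end.

Definition ready (s : bstate) : bool :=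
  match s with
  | None => false
  | Some None => true
  | Some (Some (k, _, qB, qA)) => token_ok k qB qA
  end.

Definition blocks_dfa : DFA letter :=
  {| dstate := bstate; dstart := Some None;
     daccept := fun s => if s is Some (Some _) then ready s else false;
     dtrans := btrans |}.

Lemma run_block s bl : ready s -> exists ph,
  foldl btrans s (block_word bl) =
  Some (Some (token bl, ph, foldl (@dtrans _ DB) (dstart DB) (bpart bl),
                            foldl (@dtrans _ DA) (dstart DA) (apart bl))).
Proof.
case: bl => k u v /= rs.
have -> : btrans s (inl k) = Some (Some (k, false, dstart DB, dstart DA)).
  by case: s rs => [[[[[? ?] ?] ?]|]|] //= ->.
rewrite foldl_cat.
have -> q : foldl btrans (Some (Some (k, false, q, dstart DA))) (map (inr \o inr) u) =
           Some (Some (k, false, foldl (@dtrans _ DB) q u, dstart DA)).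
  by elim: u q => //= y u IH q; rewrite IH.
have runA ph q : foldl btrans (Some (Some (k, ph, foldl (@dtrans _ DB) (dstart DB) u, q)))
    (map (inr \o inl) v) =
  Some (Some (k, ph || (v != [::]), foldl (@dtrans _ DB) (dstart DB) u, foldl (@dtrans _ DA) q v)).
  by elim: v ph q => [|x v IH] [] q //=; rewrite IH.
by rewrite runA; eexists.
Qed.

Lemma ready_blocks s bs : ready s -> all block_valid bs ->
  ready (foldl btrans s (flatten (map block_word bs))).
Proof.
elim: bs s => // bl bs IH s rs /andP [vb vbs].
have -> : flatten (map block_word (bl :: bs)) = block_word bl ++ flatten (map block_word bs).
  by [].
by rewrite foldl_cat; have [ph ->] := run_block bl rs; apply: IH.
Qed.

Lemma run_blocks_inv w :
  match foldl btrans (Some None) w with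
  | None => True
  | Some None => w = [::]
  | Some (Some (k, ph, qB, qA)) => exists bs u v,
      [/\ all block_valid bs, w = flatten (map block_word bs) ++ block_word (Block k u v),
          qB = foldl (@dtrans _ DB) (dstart DB) u, qA = foldl (@dtrans _ DA) (dstart DA) v
        & ~~ ph -> v = [::]]
  end.
Proof.
elim/last_ind: w => [|w x IH] //; rewrite foldl_rcons.
case: (foldl btrans (Some None) w) IH => [[[[[k ph] qB] qA]|]|] //= IH; last first.
  by case: x => [k|//]; exists [::], [::], [::]; rewrite IH.
have [bs [u [v [vbs ew eB eA ev]]]] := IH.
case: x => [k'|[xa|xb]] /=.
- case ok: (token_ok k qB qA) => //.
  exists (rcons bs (Block k u v)), [::], [::]; split=> //.
    by rewrite all_rcons vbs andbT /block_valid /= -eB -eA.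
  by rewrite ew map_rcons flatten_rcons -cats1 -catA.
- exists bs, u, (rcons v xa); split=> //; last by rewrite foldl_rcons eA.
  by rewrite ew rcons_cat /block_word /= map_rcons rcons_cat.
- case: ph ev {IH} => // /(_ isT) ev; subst v.
  exists bs, (rcons u xb), [::]; split=> //; last by rewrite foldl_rcons eB.
  by rewrite ew rcons_cat /block_word /= !cats0 map_rcons.
Qed.

Lemma blocks_dfa_accepts w : dfa_accepts blocks_dfa w <->
  exists bs, [/\ bs <> [::], all block_valid bs & w = flatten (map block_word bs)].
Proof.
split.
  rewrite /dfa_accepts /=; have := run_blocks_inv w.
  case: (foldl btrans (Some None) w) => [[[[[k ph] qB] qA]|]|] //=.
  move=> [bs [u [v [vbs -> eB eA _]]]] ok.
  exists (rcons bs (Block k u v)); split; first by case: bs {vbs}.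
    by rewrite all_rcons vbs andbT /block_valid /= -eB -eA.
  by rewrite map_rcons flatten_rcons.
case=> bs [+ vbs ->]; case/lastP: bs vbs => [|bs bl] // vbs _.
move: vbs; rewrite all_rcons => /andP [vb vbs].
rewrite /dfa_accepts map_rcons flatten_rcons foldl_cat.
by have [ph ->] := run_block bl (ready_blocks (s := Some None) isT vbs).
Qed.

End BlockAutomaton.

Arguments block_word {XA XB}.

Section RegularOrder.
Variables (A B G : Group) (iA : A -> G) (iB : B -> G).
Hypotheses (iA_hom : is_hom iA) (iB_hom : is_hom iB).
Variables (ltA : A -> A -> Prop) (ltB : B -> B -> Prop).
Hypotheses (LA : left_order ltA) (LB : left_order ltB).
Variable nf : G -> seq (syllable A B).
Hypothesis NF : normal_form iA iB nf.
Variables (XA : finType) (sA : XA -> A) (DA : DFA XA).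
Hypothesis sA_onto : forall a, exists w, word_eval sA w = a.
Hypothesis DA_cone :
  forall a, positive_cone ltA a <-> exists w, dfa_accepts DA w /\ word_eval sA w = a.
Variables (XB : finType) (sB : XB -> B) (DB : DFA XB).
Hypothesis sB_onto : forall b, exists w, word_eval sB w = b.
Hypothesis DB_cone :
  forall b, positive_cone ltB b <-> exists w, dfa_accepts DB w /\ word_eval sB w = b.

Local Notation zcone := (zcone ltA ltB nf).
Local Notation nf_weight := (nf_weight ltA ltB nf).

Definition token_value (k : bool * bool) : Z := (Z.b2z k.1 + Z.b2z k.2 - 1)%Z.

Definition letter_value (x : letter XA XB) : prodZ G :=
  match x with
  | inl k => (gone, token_value k)
  | inr (inl a) => (iA (sA a), 0%Z)
  | inr (inr b) => (iB (sB b), 0%Z)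
  end.

Definition block_value (bl : block XA XB) : prodZ G :=
  (gmul (iB (word_eval sB (bpart bl))) (iA (word_eval sA (apart bl))), token_value (token bl)).

Lemma word_eval_apart v :
  word_eval letter_value (map (inr \o inl) v) = (iA (word_eval sA v), 0%Z).
Proof. by elim: v => [|x v IH] /=; rewrite ?(hom1 iA_hom) // IH /pz_mul /= iA_hom. Qed.

Lemma word_eval_bpart u :
  word_eval letter_value (map (inr \o inr) u) = (iB (word_eval sB u), 0%Z).
Proof. by elim: u => [|x u IH] /=; rewrite ?(hom1 iB_hom) // IH /pz_mul /= iB_hom. Qed.

Lemma word_eval_block bl : word_eval letter_value (block_word bl) = block_value bl.
Proof.
case: bl => k u v; rewrite /block_word /= word_eval_cat word_eval_apart word_eval_bpart.
by rewrite /pz_mul /= gmul1g Z.add_0_r.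
Qed.

Lemma word_eval_blocks bs :
  word_eval letter_value (flatten (map block_word bs)) = word_eval block_value bs.
Proof.
elim: bs => // bl bs IH.
rewrite (_ : flatten _ = block_word bl ++ flatten (map block_word bs)) //.
by rewrite word_eval_cat word_eval_block IH.
Qed.

Lemma zcone_block bl : block_valid DA DB bl -> zcone (block_value bl).
Proof.
case: bl => -[k1 k2] u v; rewrite /block_valid /token_ok /= => /andP [/orP accB /orP accA].
rewrite /block_value /=; set b := word_eval sB u; set a := word_eval sA v.
have posB : ~~ k1 -> ltB gone b by case: accB => [->//|? _]; apply/DB_cone; exists u.
have posA : ~~ k2 -> ltA gone a by case: accA => [->//|? _]; apply/DA_cone; exists v.
clear accA accB.
have fB : (negz ltB b <= Z.b2z k1)%Z.
  by case: k1 posB => [_|/(_ isT)/(negz_pos LB) ->]; have := negz_bound ltB b; cbn [Z.b2z]; lia.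
have fA : (negz ltA a <= Z.b2z k2)%Z.
  by case: k2 posA => [_|/(_ isT)/(negz_pos LA) ->]; have := negz_bound ltA a; cbn [Z.b2z]; lia.
have nf_ba := nf_BA iA_hom iB_hom NF b a; set w0 := consB b _ in nf_ba.
suff [w0_ge0 w0_nil] : (0 <= token_value (k1, k2) + weight ltA ltB w0)%Z /\
    (w0 = [::] -> token_value (k1, k2) <> 0%Z).
  split; last by rewrite /= /nf_weight nf_ba.
  by case=> /(f_equal nf); rewrite nf_ba (nf1 NF) => /w0_nil.
have tB : b = gone -> k1 = true.
  by move=> eb; case: k1 posB {fB} => // /(_ isT); rewrite eb => /(lt_irrefl LB).
have tA : a = gone -> k2 = true.
  by move=> ea; case: k2 posA {fA} => // /(_ isT); rewrite ea => /(lt_irrefl LA).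
rewrite /w0 /token_value.
have [ea|na] := excluded_middle_informative (a = gone);
have [eb|nb] := excluded_middle_informative (b = gone).
- by rewrite ea eb consA1 consB1 (tA ea) (tB eb); split=> [|_]; cbn; lia.
- rewrite ea consA1 consB_nt // (tA ea); cbn [weight nu fst snd Z.b2z].
  by split=> //; lia.
- rewrite eb consB1 consA_nt // (tB eb); cbn [weight nu fst snd Z.b2z].
  by split=> //; lia.
- rewrite consA_nt // consB_nt //; cbn [weight nu isB fst snd Z.b2z].
  by split=> //; lia.
Qed.

Lemma zcone_blocks bs :
  bs <> [::] -> all (block_valid DA DB) bs -> zcone (word_eval block_value bs).
Proof.
elim: bs => [|bl [|bl' bs] IH] // _ /andP [vb vbs].
  by rewrite -[word_eval _ _]/(gmul (block_value bl) gone) gmulg1; apply: zcone_block.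
exact: zcone_mul (zcone_block vb) (IH _ vbs).
Qed.

Lemma syllable_wordA a : a <> gone ->
  exists v, word_eval sA v = a /\ isneg ltA a || dfa_accepts DA v.
Proof.
move=> na; case: (boolP (isneg ltA a)) => [_|nn]; first by have [v ?] := sA_onto a; exists v.
by have [v [? ?]] := (DA_cone a).1 (pos_of_notneg LA na nn); exists v; split=> //; apply/orP; right.
Qed.

Lemma syllable_wordB b : b <> gone ->
  exists u, word_eval sB u = b /\ isneg ltB b || dfa_accepts DB u.
Proof.
move=> nb; case: (boolP (isneg ltB b)) => [_|nn]; first by have [u ?] := sB_onto b; exists u.
by have [u [? ?]] := (DB_cone b).1 (pos_of_notneg LB nb nn); exists u; split=> //; apply/orP; right.
Qed.

Lemma reduced_blocks w : reduced w -> exists bs,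
  all (block_valid DA DB) bs /\ word_eval block_value bs = (eval iA iB w, (- weight ltA ltB w)%Z).
Proof.
have [n] := ubnP (size w); elim: n w => // n IH [|[a|b] w] ltwn rw; first by exists [::].
- have [na [_ rw']] := rw; have [bs [vbs ebs]] := IH w ltwn rw'.
  have [v [ev accv]] := syllable_wordA na.
  exists (Block (true, isneg ltA a) [::] v :: bs).
  split; first by rewrite /= vbs andbT; exact: accv.
  rewrite -(consA_nt _ na) eval_consA // (weight_consA ltB LA) word_eval_cons ebs.
  rewrite prodZ_mulE /block_value /token_value; cbn [fst snd token bpart apart Z.b2z].
  by rewrite ev (hom1 iB_hom) gmul1g /negz; congr pair; cbn [fst snd]; lia.
- case: w ltwn rw => [|[a|b'] w] ltwn rw; last by case: rw => _ [].
    have [nb _] := rw; have [u [eu accu]] := syllable_wordB nb.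
    exists [:: Block (isneg ltB b, true) u [::]].
    split; first by rewrite /= andbT /block_valid /token_ok /= andbT; exact: accu.
    rewrite /eval !word_eval_cons !gmulg1 /block_value /token_value.
    cbn [fst snd token bpart apart Z.b2z weight nu].
    by rewrite eu (hom1 iA_hom) gmulg1 /negz; congr pair; cbn [fst snd]; lia.
  have [nb [_ [na [_ rw']]]] := rw; have [bs [vbs ebs]] := IH w (ltnW ltwn) rw'.
  have [u [eu accu]] := syllable_wordB nb; have [v [ev accv]] := syllable_wordA na.
  exists (Block (isneg ltB b, isneg ltA a) u v :: bs); split.
    by rewrite /= vbs andbT; apply/andP; split; [exact: accu | exact: accv].
  rewrite /eval !word_eval_cons -/(eval iA iB w) ebs weight_BA prodZ_mulE.
  rewrite /block_value /token_value; cbn [fst snd token bpart apart].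
  by rewrite eu ev gmulA /negz; congr pair; lia.
Qed.

Definition unit_block : block XA XB := Block (true, true) [::] [::].

Lemma block_value_unit : block_value unit_block = (gone, 1%Z).
Proof. by rewrite /block_value /= (hom1 iA_hom) (hom1 iB_hom) gmul1g. Qed.

Lemma zcone_accepted x :
  zcone x <-> exists w, dfa_accepts (blocks_dfa DA DB) w /\ word_eval letter_value w = x.
Proof.
split; last first.
  case=> w [/blocks_dfa_accepts [bs [bs0 vbs ->]] <-].
  by rewrite word_eval_blocks; apply: zcone_blocks.
case: x => g m [nx /= pm].
have [bs [vbs ebs]] := reduced_blocks (reduced_nf NF g).
rewrite (eval_nf NF) -/(nf_weight g) in ebs.
pose bs' := bs ++ nseq (Z.to_nat (m + nf_weight g)) unit_block.
have ebs' : word_eval block_value bs' = (g, m).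
  rewrite /bs' word_eval_cat ebs (word_eval_nseq_central _ block_value_unit).
  by rewrite prodZ_mulE gmulg1 /=; congr pair; lia.
exists (flatten (map block_word bs')); rewrite word_eval_blocks ebs'; split=> //.
apply/blocks_dfa_accepts; exists bs'; split=> //.
  by move=> e; apply: nx; rewrite -ebs' e.
by rewrite all_cat vbs all_nseq orbT.
Qed.

Lemma letter_value_onto x : exists w, word_eval letter_value w = x.
Proof.
(* Push (g, m) into the cone by adding K, then come back with K letters of value (1, -1). *)
case: x => g m; pose K := Z.to_nat (Z.abs (m + nf_weight g) + 1).
have eK : Z.of_nat K = (Z.abs (m + nf_weight g) + 1)%Z by rewrite /K; lia.
have [|w [_ ew]] := (zcone_accepted (g, (m + Z.of_nat K)%Z)).1.
  split=> /=; last by lia.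
  by case=> eg; move: eK; rewrite eg (nf_weight1 ltA ltB NF); lia.
exists (w ++ nseq K (inl (false, false))).
rewrite word_eval_cat ew.
rewrite (word_eval_nseq_central (s := letter_value) (x := inl (false, false)) (z := -1) _ erefl).
by rewrite prodZ_mulE gmulg1 /=; congr pair; lia.
Qed.

Lemma zcone_regular : regular_order (cone_lt zcone).
Proof.
exists (letter XA XB), letter_value; split; first exact: letter_value_onto.
by exists (blocks_dfa DA DB) => x; rewrite positive_cone_lt; apply: zcone_accepted.
Qed.

End RegularOrder.

Theorem corollary5p15 (A B G : Group) (iA : A -> G) (iB : B -> G) :
  is_free_product iA iB ->
  admits_regular_left_order A ->
  admits_regular_left_order B ->
  admits_regular_left_order (prodZ G).
Proof.
move=> FP [ltA [LA [XA [sA [sA_onto [DA DA_cone]]]]]] [ltB [LB [XB [sB [sB_onto [DB DB_cone]]]]]].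
have [iA_hom [iB_hom _]] := FP.
have [nf NF] := free_product_normal_form FP.
exists (cone_lt (zcone ltA ltB nf)); split.
  apply: cone_lt_left_order; [exact: zcone_mul | exact: zcone1 | exact: zcone_total].
exact (zcone_regular iA_hom iB_hom LA LB NF sA_onto DA_cone sB_onto DB_cone).
Qed.
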